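(* Let $c_0,\dots,c_{N-1}$ be the vertices of a convex polygonal arc in the plane, let $L_i=\tfrac12(c_{i+1}-c_i)$ for $0\le i\le N-2$, and assume $[L_i,L_j]>0$ whenever $i<j$. For $0\le i\le j\le N-1$ define $$p(i,j)=\frac{c_i+c_j}{2},\qquad f(i,j)=\sum_{i\le k<l\le j-1}[L_k,L_l],\qquad q(i,j)=(p(i,j),f(i,j))\in\mathbb{R}^3.$$ Then $q$ is a discrete indefinite improper affine sphere, that is: (1) for all $1\le i<j\le N-2$ the five points $q(i,j),q(i+1,j),q(i-1,j),q(i,j-1),q(i,j+1)$ are coplanar; and (2) there is a fixed direction $\xi\in\mathbb{R}^3$ such that for all $0\le i<j\le N-2$ the vector $q(i,j)+q(i+1,j+1)-q(i+1,j)-q(i,j+1)$ is parallel to $\xi$.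
   Context: $[X,Y]$ denotes the determinant of the $2\times 2$ matrix with columns $X,Y$. A map $q:\mathbb{Z}^2\to\mathbb{R}^3$ is called a discrete indefinite improper affine sphere if (i) for each $(i,j)$ the points $q(i,j),q(i\pm1,j),q(i,j\pm1)$ are coplanar and (ii) there is a direction $\xi$ such that every $q(i,j)+q(i+1,j+1)-q(i+1,j)-q(i,j+1)$ is parallel to $\xi$. *)

From HB Require Import structures.
From mathcomp Require Import all_boot all_order all_algebra.
Set Implicit Arguments. Unset Strict Implicit. Unset Printing Implicit Defensive.
Import Order.TTheory GRing.Theory Num.Theory.
Local Open Scope ring_scope.

Section Defs.
Variable R : realFieldType.

Definition pt2 := (R * R)%type.
Definition pt3 := (R * R * R)%type.

Definition det2 (X Y : pt2) : R := X.1 * Y.2 - X.2 * Y.1.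

Definition add3 (u v : pt3) : pt3 := (u.1.1 + v.1.1, u.1.2 + v.1.2, u.2 + v.2).
Definition sub3 (u v : pt3) : pt3 := (u.1.1 - v.1.1, u.1.2 - v.1.2, u.2 - v.2).
Definition scale3 (t : R) (u : pt3) : pt3 := (t * u.1.1, t * u.1.2, t * u.2).
Definition dot3 (u v : pt3) : R := u.1.1 * v.1.1 + u.1.2 * v.1.2 + u.2 * v.2.

Definition coplanar (s : seq pt3) : Prop :=
  exists (n : pt3) (d : R), n <> (0, 0, 0) /\ forall x, x \in s -> dot3 n x = d.

Definition parallel (u xi : pt3) : Prop := exists t : R, u = scale3 t xi.

Definition Ledge (c : nat -> pt2) (i : nat) : pt2 :=
  (((c i.+1).1 - (c i).1) / 2, ((c i.+1).2 - (c i).2) / 2).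

Definition pmid (c : nat -> pt2) (i j : nat) : pt2 :=
  (((c i).1 + (c j).1) / 2, ((c i).2 + (c j).2) / 2).

Definition fsum (c : nat -> pt2) (i j : nat) : R :=
  \sum_(i <= k < j) \sum_(k.+1 <= l < j) det2 (Ledge c k) (Ledge c l).

Definition qmap (c : nat -> pt2) (i j : nat) : pt3 :=
  ((pmid c i j).1, (pmid c i j).2, fsum c i j).

End Defs.

From HB Require Import structures.
From mathcomp Require Import all_boot all_order all_algebra.
From mathcomp Require Import ring.
Import Order.TTheory GRing.Theory Num.Theory.
Set Implicit Arguments. Unset Strict Implicit.
Local Open Scope ring_scope.

(* With D := (c_j - c_i)/2, the height satisfies f(i,j+1) = f(i,j) + [D, L_j] and
   f(i,j) = f(i+1,j) + [L_i, D - L_i], while p moves by L_j resp. L_i.  Since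
   [L, L] = 0, every step from (i,j) to a neighbour changes f by exactly [D, dp],
   so the five points lie on the plane z - [D, p] = f(i,j) - [D, p(i,j)].  The
   mixed second difference of p vanishes and that of f is -[L_i, L_j], so the
   mixed differences of q are all vertical. *)

Section Det2.
Variable R : realFieldType.
Implicit Types X Y Z : pt2 R.

Lemma det2Dl X Y Z : det2 (X + Y) Z = det2 X Z + det2 Y Z.
Proof. by rewrite /det2 /=; ring. Qed.

Lemma det2Dr X Y Z : det2 X (Y + Z) = det2 X Y + det2 X Z.
Proof. by rewrite /det2 /=; ring. Qed.

Lemma det20l Y : det2 0 Y = 0.
Proof. by rewrite /det2 /= !mul0r subrr. Qed.

Lemma det20r X : det2 X 0 = 0.
Proof. by rewrite /det2 /= !mulr0 subrr. Qed.

Lemma det2_suml I (r : seq I) (P : pred I) (F : I -> pt2 R) Y :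
  det2 (\sum_(i <- r | P i) F i) Y = \sum_(i <- r | P i) det2 (F i) Y.
Proof. exact: (big_morph (fun X => det2 X Y) (fun X Z => det2Dl X Z Y) (det20l Y)). Qed.

Lemma det2_sumr I (r : seq I) (P : pred I) X (F : I -> pt2 R) :
  det2 X (\sum_(i <- r | P i) F i) = \sum_(i <- r | P i) det2 X (F i).
Proof. exact: (big_morph (fun Y => det2 X Y) (det2Dr X) (det20r X)). Qed.

End Det2.

Section Arc.
Variable R : realFieldType.
Variable c : nat -> pt2 R.

Definition chord (i j : nat) : pt2 R :=
  (((c j).1 - (c i).1) / 2, ((c j).2 - (c i).2) / 2).

Lemma chordxx i : chord i i = 0.
Proof. by rewrite /chord !subrr mul0r. Qed.

Lemma chordSr i j : chord i j.+1 = chord i j + Ledge c j.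
Proof. by rewrite /chord /Ledge; congr (_, _) => /=; ring. Qed.

Lemma chordSl i j : chord i j = Ledge c i + chord i.+1 j.
Proof. by rewrite /chord /Ledge; congr (_, _) => /=; ring. Qed.

Lemma pmidSr i j : pmid c i j.+1 = pmid c i j + Ledge c j.
Proof. by rewrite /pmid /Ledge; congr (_, _) => /=; ring. Qed.

Lemma pmidSl i j : pmid c i.+1 j = pmid c i j + Ledge c i.
Proof. by rewrite /pmid /Ledge; congr (_, _) => /=; ring. Qed.

Lemma sum_Ledge i j : (i <= j)%N -> \sum_(i <= k < j) Ledge c k = chord i j.
Proof.
elim: j => [|j IHj]; first by rewrite leqn0 => /eqP->; rewrite big_geq // chordxx.
rewrite leq_eqVlt => /orP[/eqP->|lt_ij]; first by rewrite big_geq // chordxx.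
by rewrite big_nat_recr // IHj // chordSr.
Qed.

Lemma fsumSr i j : (i <= j)%N ->
  fsum c i j.+1 = fsum c i j + det2 (chord i j) (Ledge c j).
Proof.
move=> le_ij; rewrite /fsum big_nat_recr //= [X in _ + X]big_geq // addr0.
rewrite (@eq_big_nat _ _ _ _ _ _
  (fun k => \sum_(k.+1 <= l < j) det2 (Ledge c k) (Ledge c l) + det2 (Ledge c k) (Ledge c j))).
  by rewrite big_split /= -det2_suml sum_Ledge.
by move=> k /andP[_ lt_kj]; rewrite big_nat_recr.
Qed.

Lemma fsumSl i j : (i < j)%N ->
  fsum c i j = det2 (Ledge c i) (chord i.+1 j) + fsum c i.+1 j.
Proof. by move=> lt_ij; rewrite /fsum big_ltn // -det2_sumr sum_Ledge. Qed.

(* q(i,j) lies on the plane with normal (D.2, -D.1, 1) through level t iff tilt D i j = t. *)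
Definition tilt (D : pt2 R) (i j : nat) : R := fsum c i j - det2 D (pmid c i j).

Lemma tiltSr D i j : (i <= j)%N ->
  tilt D i j.+1 = tilt D i j + det2 (chord i j - D) (Ledge c j).
Proof. by move=> le_ij; rewrite /tilt fsumSr // pmidSr /det2 /=; ring. Qed.

Lemma tiltSl D i j : (i < j)%N ->
  tilt D i j = tilt D i.+1 j + det2 (Ledge c i) (chord i.+1 j - D).
Proof. by move=> lt_ij; rewrite /tilt fsumSl // pmidSl /det2 /=; ring. Qed.

Lemma tilt_chord_neighbours i j : (0 < i)%N -> (i < j)%N ->
  let D := chord i j in
  [/\ tilt D i.+1 j = tilt D i j, tilt D i.-1 j = tilt D i j,
       tilt D i j.-1 = tilt D i j & tilt D i j.+1 = tilt D i j].
Proof.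
case: j => // j i_gt0 lt_ij D; rewrite ltnS in lt_ij.
have lt_pi_Sj : (i.-1 < j.+1)%N by rewrite ltnS (leq_trans (leq_pred i)).
split.
- by rewrite [RHS]tiltSl ?ltnS // /D (chordSl i) /det2 /=; ring.
- by rewrite (tiltSl D lt_pi_Sj) prednK // /D subrr det20r addr0.
- by rewrite [RHS]tiltSr // /D chordSr /det2 /=; ring.
- by rewrite tiltSr 1?ltnW // /D subrr det20l addr0.
Qed.

Lemma fsum_cross i j : (i < j)%N ->
  fsum c i j + fsum c i.+1 j.+1 - (fsum c i.+1 j + fsum c i j.+1) =
  - det2 (Ledge c i) (Ledge c j).
Proof.
move=> lt_ij; rewrite (fsumSr (ltnW lt_ij)) (fsumSr lt_ij) (chordSl i j).
by rewrite /det2 /=; ring.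
Qed.

Definition plane_normal (D : pt2 R) : pt3 R := (D.2, - D.1, 1).

Lemma dot3_qmap D i j : dot3 (plane_normal D) (qmap c i j) = tilt D i j.
Proof. by rewrite /dot3 /tilt /det2 /=; ring. Qed.

Lemma qmap_cross i j : (i < j)%N ->
  sub3 (add3 (qmap c i j) (qmap c i.+1 j.+1)) (add3 (qmap c i.+1 j) (qmap c i j.+1))
  = scale3 (- det2 (Ledge c i) (Ledge c j)) (0, 0, 1).
Proof.
move=> lt_ij; rewrite /sub3 /add3 /scale3 /= -fsum_cross // mulr1 !mulr0.
by congr (_, _, _); rewrite /pmid /=; ring.
Qed.

End Arc.

Theorem mainTheorem5 (R : realFieldType) (N : nat) (c : nat -> pt2 R) :
  (forall i j : nat, (i < j)%N -> (j <= N - 2)%N ->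
     0 < det2 (Ledge c i) (Ledge c j)) ->
  (forall i j : nat, (1 <= i)%N -> (i < j)%N -> (j <= N - 2)%N ->
     coplanar [:: qmap c i j; qmap c i.+1 j; qmap c i.-1 j;
                  qmap c i j.-1; qmap c i j.+1]) /\
  (exists xi : pt3 R, xi <> (0, 0, 0) /\
     forall i j : nat, (i < j)%N -> (j <= N - 2)%N ->
       parallel (sub3 (add3 (qmap c i j) (qmap c i.+1 j.+1))
                      (add3 (qmap c i.+1 j) (qmap c i j.+1))) xi).
Proof.
have e3_neq0 : (0, 0, 1) <> (0, 0, 0) :> pt3 R by case=> /eqP; rewrite oner_eq0.
move=> _; split.
  move=> i j i_gt0 lt_ij _; set D := chord c i j.
  exists (plane_normal D), (tilt c D i j); split; first by case=> _ _ /eqP; rewrite oner_eq0.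
  have [E1 E2 E3 E4] := tilt_chord_neighbours c i_gt0 lt_ij.
  move=> x; rewrite !inE => /orP[|/orP[|/orP[|/orP[]]]] /eqP->;
  by rewrite dot3_qmap ?E1 ?E2 ?E3 ?E4.
exists (0, 0, 1); split=> // i j lt_ij _.
by exists (- det2 (Ledge c i) (Ledge c j)); rewrite qmap_cross.
Qed.
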